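(* Let $(V,c)$ be a network and $\Omega\subset V$ a finite subset of size $n$. Let $(\lambda_i,u_i)_{i=1}^n$ be a Dirichlet system for $\Omega$. Let $\mathcal H$ be a real Hilbert space and $\alpha:V\to\mathcal H$. Then for any $k<n$, $$\sum_{i=1}^k(\lambda_{k+1}-\lambda_i)^2\Big(\langle\Gamma(\alpha),u_i^2\rangle-\Lambda(\alpha,u_i)\Big)\le\sum_{i=1}^k(\lambda_{k+1}-\lambda_i)\,\big\|u_i\cdot\Delta\alpha-2\Gamma(\alpha,u_i)\big\|^2.$$
   Context: A network is a pair $(V,c)$ with $V$ countable and $c:V\times V\to[0,\infty)$ symmetric with $\pi(x):=\sum_y c(x,y)<\infty$. Set $P(x,y)=c(x,y)/\pi(x)$ and, for functions $f$ (real- or $\mathcal H$-valued), $\Delta f(x)=\sum_yP(x,y)(f(x)-f(y))$. For real $u$, $\langle f,g\rangle=\sum_x\pi(x)f(x)g(x)$. For $\alpha:V\to\mathcal H$ and real $u:V\to\mathbb R$ define: $2\Gamma(\alpha,u)(x)=\sum_yP(x,y)(u(x)-u(y))(\alpha(x)-\alpha(y))\in\mathcal H$; $2\Gamma(\alpha)(x)=\sum_yP(x,y)\|\alpha(x)-\alpha(y)\|_{\mathcal H}^2$; $\langle\Gamma(\alpha),u^2\rangle=\sum_x\pi(x)\Gamma(\alpha)(x)u(x)^2$; for $\beta:V\to\mathcal H$, $\|\beta\|^2=\sum_x\pi(x)\|\beta(x)\|_{\mathcal H}^2$; and $\Lambda(\alpha,u)=\frac14\sum_{x,y}c(x,y)|u(x)-u(y)|^2\|\alpha(x)-\alpha(y)\|_{\mathcal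 H}^2$. For finite $\Omega\subset V$ with $|\Omega|=n$, let $\Delta_\Omega f=\mathbf 1_\Omega\cdot\Delta f$ be the Dirichlet Laplacian on the space of functions vanishing outside $\Omega$. A Dirichlet system for $\Omega$ is $(\lambda_i,u_i)_{i=1}^n$ with $\lambda_1\le\cdots\le\lambda_n$ the eigenvalues of $\Delta_\Omega$, $u_i$ real-valued, vanishing outside $\Omega$, $\Delta_\Omega u_i=\lambda_iu_i$, and $\langle u_i,u_j\rangle=\mathbf 1_{i=j}$. *)

From HB Require Import structures.
From mathcomp Require Import all_boot all_order all_algebra finmap.
From mathcomp Require Import all_classical all_reals all_analysis.
Set Implicit Arguments. Unset Strict Implicit. Unset Printing Implicit Defensive.
Import Order.TTheory GRing.Theory Num.Theory.
Import numFieldNormedType.Exports.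
Local Open Scope classical_set_scope.
Local Open Scope ring_scope.

(* the net of finite sub-sums, indexed by finite subsets ordered by inclusion *)
Definition totally {I : choiceType} : set_system {fset I} :=
  filter_from setT (fun A => [set B | (A `<=` B)%fset]).

Definition psum {I : choiceType} {W : zmodType} (F : I -> W) (A : {fset I}) : W :=
  \sum_(i <- A) F i.

Definition hasSum {I : choiceType} {R : numFieldType} {W : normedModType R}
  (F : I -> W) (s : W) : Prop := psum F @ totally --> s.

(* the sum  \sum_i F i  (meaningful when F is summable) *)
Definition vsum {I : choiceType} {R : numFieldType} {W : normedModType R}
  (F : I -> W) : W := lim (psum F @ totally).

Section Network.
Variables (R : realType) (V : countType) (c : V -> V -> R).

Definition pi (x : V) : R := vsum (c x).
Definition is_network : Prop :=
  [/\ forall x y, 0 <= c x y, forall x y, c x y = c y x,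
      forall x, exists s, hasSum (c x) s & forall x, 0 < pi x].

Definition P (x y : V) : R := c x y / pi x.

Definition lap {W : normedModType R} (f : V -> W) (x : V) : W :=
  vsum (fun y => P x y *: (f x - f y)).

(* Dirichlet Laplacian on functions vanishing outside Omega *)
Definition lapD (Om : {fset V}) (f : V -> R) (x : V) : R :=
  if x \in Om then lap f x else 0.

Definition ipi (f g : V -> R) : R := vsum (fun x => pi x * f x * g x).

Variable (H : normedModType R).

Definition GammaAU (alpha : V -> H) (u : V -> R) (x : V) : H :=
  2^-1 *: vsum (fun y => (P x y * (u x - u y)) *: (alpha x - alpha y)).

Definition GammaA (alpha : V -> H) (x : V) : R :=
  2^-1 * vsum (fun y => P x y * `|alpha x - alpha y| ^+ 2).

Definition GammaA_u2 (alpha : V -> H) (u : V -> R) : R :=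
  vsum (fun x => pi x * GammaA alpha x * u x ^+ 2).

Definition normsq (beta : V -> H) : R := vsum (fun x => pi x * `|beta x| ^+ 2).

Definition Lambda (alpha : V -> H) (u : V -> R) : R :=
  4^-1 * vsum (fun xy : V * V =>
     c xy.1 xy.2 * `|u xy.1 - u xy.2| ^+ 2 * `|alpha xy.1 - alpha xy.2| ^+ 2).

End Network.

(* ip is an inner product on H inducing its norm (so a complete H is a real
   Hilbert space) *)
Definition inner_product_for {R : realType} {H : normedModType R}
  (ip : H -> H -> R) : Prop :=
  [/\ forall x y, ip x y = ip y x,
      forall (a : R) x y z, ip (a *: x + y) z = a * ip x z + ip y z
    & forall x, ip x x = `|x| ^+ 2].

From Pilot Require Import Defs.
From mathcomp Require Import all_boot all_order all_algebra finmap.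
From mathcomp Require Import all_classical all_reals all_analysis.
From mathcomp Require Import lra ring.
Import Order.TTheory GRing.Theory Num.Theory.
Import numFieldNormedType.Exports.
Local Open Scope classical_set_scope.
Local Open Scope ring_scope.

(* Write beta_i := u_i Delta alpha - 2 Gamma(alpha, u_i); since u_i vanishes off Omega,
   beta_i(x) = sum_{y in Omega} P(x,y) u_i(y) (alpha(x) - alpha(y)).  Put
   a_ij := sum_{x in Omega} pi(x) u_i(x) u_j(x) alpha(x) in H.  Symmetry of c and the
   eigenvalue equations give sum_{x in Omega} pi u_j beta_i = (lam_j - lam_i) a_ij, and a
   direct computation gives <Gamma(alpha), u_i^2> - Lambda(alpha, u_i) =
   sum_{x in Omega} pi <beta_i, u_i alpha>.  As n orthonormal functions on the n-point set
   Omega form a basis, Parseval's identity turns these into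
     <Gamma(alpha), u_i^2> - Lambda(alpha, u_i) = sum_j (lam_j - lam_i) |a_ij|^2,
     ||beta_i||^2 >= sum_{x in Omega} pi |beta_i|^2 = sum_j (lam_j - lam_i)^2 |a_ij|^2.
   Weighting by (lam_{k+1} - lam_i)^2 and (lam_{k+1} - lam_i), the difference of the two
   sides over i <= k is a double sum whose terms with j <= k cancel, |a_ij| being
   symmetric, while the terms with j > k are nonpositive. *)

Lemma totally_proper (I : choiceType) : ProperFilter (@totally I).
Proof.
apply: filter_from_proper; last by move=> A _; exists A => /=.
apply: filter_fromT_filter; first by exists fset0.
by move=> A B; exists (A `|` B)%fset => C /= AB_C; split;
  apply: fsubset_trans AB_C; rewrite ?fsubsetUl ?fsubsetUr.
Qed.
#[global] Existing Instance totally_proper.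

Lemma near_totally {I : choiceType} {Q : {fset I} -> Prop} :
  (\forall B \near totally, Q B) <-> exists A, forall B, (A `<=` B)%fset -> Q B.
Proof. by split=> [[A _ QA]|[A QA]]; exists A. Qed.

Lemma psum_fsubset {I : choiceType} {W : zmodType} (F : I -> W) {A B : {fset I}} :
  (A `<=` B)%fset -> psum F B = psum F A + \sum_(i <- B | i \notin A) F i.
Proof.
move=> AB; rewrite /psum (bigID (mem A)) /=; congr (_ + _).
rewrite -big_filter; apply/perm_big/uniq_perm; rewrite ?filter_uniq //.
move=> i; rewrite mem_filter; apply/andP/idP => [[]//|iA]; split=> //.
exact: (fsubsetP AB).
Qed.

Section UnconditionalSums.
Context {R : realType} {W : normedModType R}.

Lemma hasSum_vsum {I : choiceType} {F : I -> W} {s} : hasSum F s -> vsum F = s.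
Proof. exact: cvg_lim. Qed.

Lemma eq_hasSum {I : choiceType} {F G : I -> W} {s} :
  (forall i, F i = G i) -> hasSum F s -> hasSum G s.
Proof. by move=> /funext ->. Qed.

Lemma hasSumD {I : choiceType} {F G : I -> W} {s t} :
  hasSum F s -> hasSum G t -> hasSum (fun i => F i + G i) (s + t).
Proof.
move=> /cvgD/[apply]; suff -> : psum F + psum G = psum (fun i => F i + G i) by [].
by apply: funext => A; rewrite /psum /= big_split.
Qed.

Lemma hasSumZ {I : choiceType} {F : I -> W} {s} (a : R) :
  hasSum F s -> hasSum (fun i => a *: F i) (a *: s).
Proof.
move=> /(cvgZl_tmp (k := a)); suff -> : a \*: psum F = psum (fun i => a *: F i) by [].
by apply: funext => A; rewrite /psum /= scaler_sumr.
Qed.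

Lemma hasSum_finsupp {I : choiceType} (F : I -> W) (A : {fset I}) :
  (forall i, i \notin A -> F i = 0) -> hasSum F (\sum_(i <- A) F i).
Proof.
move=> F0; apply: cvg_near_cst; apply/near_totally; exists A => B AB.
by apply/esym/big_fset_incl => // i _; apply: F0.
Qed.

Lemma hasSum0 {I : choiceType} : hasSum (fun _ : I => 0 : W) 0.
Proof.
by have := hasSum_finsupp (fun _ : I => 0 : W) fset0; rewrite big_seq_fset0; apply.
Qed.

Lemma hasSum_big {I : choiceType} {J : eqType} {r : seq J} {F : J -> I -> W} {S : J -> W} :
  (forall j, j \in r -> hasSum (F j) (S j)) ->
  hasSum (fun i => \sum_(j <- r) F j i) (\sum_(j <- r) S j).
Proof.
elim: r => [|j r IHr] FS.
  by rewrite big_nil; apply: eq_hasSum hasSum0 => i; rewrite big_nil.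
rewrite big_cons; apply: eq_hasSum (hasSumD (FS j (mem_head _ _)) _).
  by move=> i; rewrite big_cons.
by apply: IHr => j' rj'; apply: FS; rewrite in_cons rj' orbT.
Qed.

Lemma hasSum_embed {I J : choiceType} (e : I -> J) (d : J -> option I) {F : I -> W}
    {G : J -> W} {s} :
  pcancel e d -> ocancel d e -> (forall j, G j = oapp F 0 (d j)) ->
  hasSum F s -> hasSum G s.
Proof.
move=> ed de GF /cvgrPdist_lt hF; apply/cvgrPdist_lt => r r0.
have /near_totally[A FA] := hF r r0.
apply/near_totally; exists [fset e i | i in A]%fset => B AB.
have -> : psum G B = psum F (seq_fset tt (pmap d B)).
  rewrite /psum (eq_bigr _ (fun j _ => GF j)) -big_pmap.
  apply/perm_big/uniq_perm; rewrite ?(pmap_uniq de) ?fset_uniq // => i.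
  by rewrite seq_fsetE.
apply: FA; apply/fsubsetP => i iA; rewrite seq_fsetE mem_pmap -(ed i).
by apply/map_f/(fsubsetP AB)/in_imfset.
Qed.

Lemma hasSum_swap {I : choiceType} {F : I * I -> W} {s} :
  hasSum F s -> hasSum (fun p => F (p.2, p.1)) s.
Proof.
by apply: (hasSum_embed (fun p => (p.2, p.1)) (fun p => Some (p.2, p.1))); case.
Qed.

Lemma hasSum_pair_fin {I : choiceType} {A : {fset I}} {F : I -> I -> W} {S : I -> W} :
  (forall x, x \in A -> hasSum (F x) (S x)) -> (forall x y, x \notin A -> F x y = 0) ->
  hasSum (fun p : I * I => F p.1 p.2) (\sum_(x <- A) S x).
Proof.
move=> FS F0; pose row x p := if p.1 == x then F x p.2 else 0.
have row_sum x : x \in A -> hasSum (row x) (S x).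
  move=> xA; apply: (hasSum_embed (pair x) (fun p => if p.1 == x then Some p.2 else None))
    (FS x xA).
  - by move=> y /=; rewrite eqxx.
  - by case=> y z /=; case: eqP => //= ->.
  - by case=> y z; rewrite /row /=; case: eqP.
apply: eq_hasSum (hasSum_big row_sum) => -[x y]; rewrite /row /=.
case xA: (x \in A).
  rewrite (bigD1_seq x) ?fset_uniq //= eqxx big1 ?addr0 // => z /negbTE.
  by rewrite eq_sym => ->.
rewrite F0 ?xA // big1_seq // => z /andP[_ zA]; case: eqP => // xz.
by move: xA; rewrite xz zA.
Qed.

End UnconditionalSums.

Lemma hasSum_dominated {I : choiceType} {R : realType} {W : completeNormedModType R}
    {F : I -> W} {G : I -> R} {s} :
  (forall i, `|F i| <= G i) -> hasSum G s -> exists t, hasSum F t.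
Proof.
move=> FG hG; suff : cvg (psum F @ totally) by exists (lim (psum F @ totally)).
apply: cauchy_cvg; apply: cauchy_exP => e e0.
have /(_ _)/near_totally[A GA] := cvgr_dist_lt _ _ hG (e / 2) (divr_gt0 e0 (ltr0Sn _ 1)).
exists (psum F A); apply/(near_totally (Q := fun B => ball (psum F A) e (psum F B))).
exists A => B AB; rewrite -ball_normE /= (psum_fsubset F AB).
rewrite opprD addrA subrr sub0r normrN.
apply: le_lt_trans (ler_norm_sum _ _ _) _.
apply: (@le_lt_trans _ _ (\sum_(i <- B | i \notin A) G i)); first exact: ler_sum.
move: (GA A (fsubset_refl A)) (GA B AB); rewrite (psum_fsubset G AB).
by rewrite !ltr_norml => /andP[? ?] /andP[? ?]; lra.
Qed.

Lemma psum_le_hasSum {I : choiceType} {R : realType} {f : I -> R} {s} (A : {fset I}) :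
  (forall i, 0 <= f i) -> hasSum f s -> psum f A <= s.
Proof.
move=> f0 hf; apply: (closed_cvg [set r | psum f A <= r] (@closed_ge _ _) _ _ hf).
apply/near_totally; exists A => B AB /=; rewrite (psum_fsubset f AB) lerDl.
by apply: sumr_ge0.
Qed.

Section InnerProduct.
Context {R : realType} {H : normedModType R} {ip : H -> H -> R}.
Hypothesis hip : inner_product_for ip.

Lemma ipC x y : ip x y = ip y x.
Proof. by case: hip. Qed.

Lemma ip_norm x : ip x x = `|x| ^+ 2.
Proof. by case: hip. Qed.

Lemma ipDl x y z : ip (x + y) z = ip x z + ip y z.
Proof. by case: hip => _ ipl _; rewrite -{1}(scale1r x) ipl mul1r. Qed.

Lemma ip0l z : ip 0 z = 0.
Proof. by have := ipDl 0 0 z; rewrite addr0; lra. Qed.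

Lemma ipZl a x z : ip (a *: x) z = a * ip x z.
Proof. by case: hip => _ ipl _; rewrite -(addr0 (a *: x)) ipl ip0l addr0. Qed.

Lemma ipZr a x z : ip z (a *: x) = a * ip z x.
Proof. by rewrite ipC ipZl ipC. Qed.

Lemma ipNl x z : ip (- x) z = - ip x z.
Proof. by rewrite -scaleN1r ipZl mulN1r. Qed.

Lemma ipBr x y z : ip z (x - y) = ip z x - ip z y.
Proof. by rewrite ipC ipDl ipNl !(ipC z). Qed.

Lemma ip_suml {J : Type} (r : seq J) (a : J -> R) (f : J -> H) z :
  ip (\sum_(j <- r) a j *: f j) z = \sum_(j <- r) a j * ip (f j) z.
Proof.
elim: r => [|j r IHr]; first by rewrite !big_nil ip0l.
by rewrite !big_cons ipDl ipZl IHr.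
Qed.

Lemma ip_sumr {J : Type} (r : seq J) (a : J -> R) (f : J -> H) z :
  ip z (\sum_(j <- r) a j *: f j) = \sum_(j <- r) a j * ip z (f j).
Proof. by rewrite ipC ip_suml; under eq_bigr do rewrite ipC. Qed.

Lemma parseval {V : choiceType} {Om : {fset V}} {n} {w : V -> R} {u : 'I_n -> V -> R}
    {f g : V -> H} :
  (forall x y, x \in Om -> y \in Om -> \sum_(j < n) w x * u j x * u j y = (x == y)%:R) ->
  \sum_(x <- Om) w x * ip (f x) (g x) =
  \sum_(j < n) ip (\sum_(x <- Om) (w x * u j x) *: f x) (\sum_(y <- Om) (w y * u j y) *: g y).
Proof.
move=> u_complete; apply/esym.
under eq_bigr do rewrite ip_suml; under eq_bigr do under eq_bigr do rewrite ip_sumr mulr_sumr.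
rewrite exchange_big /=; apply: eq_big_seq => x xOm.
rewrite exchange_big /= (bigD1_seq x) ?fset_uniq //= [X in _ + X]big1_seq ?addr0.
  have ux1 : \sum_(j < n) w x * u j x * u j x = 1 by rewrite u_complete ?eqxx.
  by rewrite -[RHS]mul1r -ux1 mulr_suml; apply: eq_bigr => j _; ring.
move=> y /andP[yx yOm].
have uyx0 : \sum_(j < n) w y * u j y * u j x = 0 by rewrite u_complete // (negbTE yx).
rewrite -[RHS](mul0r (w x * ip (f x) (g y))) -[X in _ = X * _]uyx0 mulr_suml.
by apply: eq_bigr => j _; ring.
Qed.

End InnerProduct.

Lemma orthonormal_complete {R : comPzRingType} {V : choiceType} {Om : {fset V}} {n}
    {w : V -> R} {u : 'I_n -> V -> R} :
  #|` Om| = n ->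
  (forall i j, \sum_(x <- Om) w x * u i x * u j x = (i == j)%:R) ->
  forall x y, x \in Om -> y \in Om -> \sum_(j < n) w x * u j x * u j y = (x == y)%:R.
Proof.
move=> nOm; subst n => u_orth x y xOm yOm; set m := #|` Om|.
pose U : 'M[R]_m := \matrix_(i, l) u i (nth x Om l).
pose Uw : 'M[R]_m := \matrix_(l, j) (w (nth x Om l) * u j (nth x Om l)).
(* A one-sided inverse of a square matrix is two-sided. *)
have /mulmx1C/matrixP UwU : U *m Uw = 1%:M.
  apply/matrixP => i j; rewrite !mxE -u_orth (big_nth x) big_mkord.
  by apply: eq_bigr => l _; rewrite !mxE mulrA (mulrC (u i _)).
have xm : (index x Om < m)%N by rewrite index_mem.
have ym : (index y Om < m)%N by rewrite index_mem.
have := UwU (Ordinal xm) (Ordinal ym); rewrite !mxE => UwU_xy.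
have -> : (x == y) = (Ordinal xm == Ordinal ym).
  apply/eqP/eqP => [xy|/(congr1 (nth x Om \o val))]; last by rewrite /= !nth_index.
  by apply: val_inj; rewrite /= xy.
by rewrite -UwU_xy; apply: eq_bigr => j _; rewrite !mxE /= !nth_index.
Qed.

Lemma sqr_sum_le {R : realFieldType} {T : Type} (r : seq T) (z : T -> R) :
  (\sum_(t <- r) z t) ^+ 2 <= (size r)%:R * \sum_(t <- r) z t ^+ 2.
Proof.
have sum_const (a : R) : \sum_(t <- r) a = (size r)%:R * a.
  elim: r => [|t r IHr]; first by rewrite big_nil mul0r.
  by rewrite big_cons IHr /= -add1n natrD mulrDl mul1r.
rewrite expr2 mulr_suml.
apply: (@le_trans _ _ (\sum_(s <- r) \sum_(t <- r) (z s ^+ 2 + z t ^+ 2) / 2)).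
  apply: ler_sum => s _; rewrite mulr_sumr; apply: ler_sum => t _.
  by have := sqr_ge0 (z s - z t); rewrite sqrrB; lra.
under eq_bigr do rewrite -mulr_suml big_split /= sum_const.
by rewrite -mulr_suml big_split /= sum_const -mulr_sumr; lra.
Qed.

Lemma sum_antisym_eq0 {R : numDomainType} {I : finType} {P : pred I} {F : I -> I -> R} :
  (forall i j, F i j = - F j i) -> \sum_(i | P i) \sum_(j | P j) F i j = 0.
Proof.
move=> F_anti; set S := \sum_(i | P i) _.
have S_opp : S = - S.
  rewrite {1}/S exchange_big /S -sumrN; apply: eq_bigr => j _.
  by rewrite -sumrN; apply: eq_bigr => i _; rewrite F_anti.
have : S *+ 2 == 0 by rewrite mulr2n {1}S_opp addNr.
by rewrite mulrn_eq0 => /eqP.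
Qed.

Lemma gap_ineq {R : realFieldType} {n : nat} {lam : 'I_n -> R}
    {A : 'I_n -> 'I_n -> R} {G N : 'I_n -> R} {k : nat} {hk : (k < n)%N} :
  (forall i j : 'I_n, (i <= j)%N -> lam i <= lam j) ->
  (forall i j, A i j = A j i) -> (forall i j, 0 <= A i j) ->
  (forall i, G i = \sum_(j < n) (lam j - lam i) * A i j) ->
  (forall i, \sum_(j < n) (lam j - lam i) ^+ 2 * A i j <= N i) ->
  \sum_(i < n | (i < k)%N) (lam (Ordinal hk) - lam i) ^+ 2 * G i <=
  \sum_(i < n | (i < k)%N) (lam (Ordinal hk) - lam i) * N i.
Proof.
move=> lam_mono A_sym A_ge0 GE N_ge; set K := lam (Ordinal hk).
have K_ge (i : 'I_n) : (i < k)%N -> 0 <= K - lam i.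
  by move=> ik; rewrite subr_ge0 lam_mono // ltnW.
pose F i j := (K - lam i) * (K - lam j) * (lam j - lam i) * A i j.
apply: (@le_trans _ _ (\sum_(i < n | (i < k)%N)
    (K - lam i) * \sum_(j < n) (lam j - lam i) ^+ 2 * A i j)); last first.
  by apply: ler_sum => i ik; apply: ler_wpM2l; [exact: K_ge|exact: N_ge].
have F_split i :
    (K - lam i) ^+ 2 * G i - (K - lam i) * \sum_(j < n) (lam j - lam i) ^+ 2 * A i j =
    \sum_(j < n | (j < k)%N) F i j + \sum_(j < n | ~~ (j < k)%N) F i j.
  rewrite GE !mulr_sumr -sumrB (bigID (fun j : 'I_n => (j < k)%N)) /=.
  by congr (_ + _); apply: eq_bigr => j _; rewrite /F; ring.
rewrite -subr_le0 -sumrB (eq_bigr _ (fun i _ => F_split i)) big_split /=.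
rewrite sum_antisym_eq0 ?add0r => [|i j]; last by rewrite /F A_sym; ring.
apply: sumr_le0 => i ik; apply: sumr_le0 => j; rewrite -leqNgt => kj.
have ij : (i <= j)%N by rewrite ltnW // (leq_trans ik).
rewrite /F mulr_le0_ge0 ?A_ge0 // mulr_le0_ge0 ?subr_ge0 ?lam_mono //.
by rewrite mulr_ge0_le0 ?K_ge // subr_le0 lam_mono.
Qed.

Definition beta_fin {R : realType} {V : countType} (c : V -> V -> R) {H : normedModType R}
    (Om : {fset V}) (alpha : V -> H) (u : V -> R) (x : V) : H :=
  \sum_(y <- Om) (Defs.P c x y * u y) *: (alpha x - alpha y).

Definition ipiH {R : realType} {V : countType} (c : V -> V -> R) {H : normedModType R}
    (Om : {fset V}) (f : V -> R) (g : V -> H) : H :=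
  \sum_(x <- Om) (Defs.pi c x * f x) *: g x.

Section Network.
Context {R : realType} {V : countType} {c : V -> V -> R}.
Hypothesis c_network : is_network c.
Local Notation pi := (Defs.pi c).
Local Notation P := (Defs.P c).

Lemma c_ge0 x y : 0 <= c x y.
Proof. by case: c_network. Qed.

Lemma c_sym x y : c x y = c y x.
Proof. by case: c_network. Qed.

Lemma pi_gt0 x : 0 < pi x.
Proof. by case: c_network. Qed.

Lemma hasSum_pi x : hasSum (c x) (pi x).
Proof. by case: c_network => _ _ /(_ x)[s cs] _; rewrite /Defs.pi (hasSum_vsum cs). Qed.

Lemma mul_pi_P x y : pi x * P x y = c x y.
Proof. by rewrite /Defs.P mulrC -mulrA mulVf ?mulr1 // gt_eqF ?pi_gt0. Qed.

Lemma P_ge0 x y : 0 <= P x y.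
Proof. by rewrite divr_ge0 ?c_ge0 ?ltW ?pi_gt0. Qed.

Lemma P_le1 x y : P x y <= 1.
Proof.
rewrite ler_pdivrMr ?pi_gt0 // mul1r.
have := psum_le_hasSum [fset y]%fset (c_ge0 x) (hasSum_pi x).
by rewrite /psum big_seq_fset1.
Qed.

Lemma hasSum_P x : hasSum (P x) 1.
Proof.
have := hasSumZ (pi x)^-1 (hasSum_pi x); rewrite [_ *: _]mulVf ?gt_eqF ?pi_gt0 //.
by apply: eq_hasSum => y; rewrite [_ *: _]mulrC.
Qed.

Lemma hasSum_P_mul {x} {f : V -> R} {s} :
  hasSum (fun y => c x y * f y) s -> hasSum (fun y => P x y * f y) ((pi x)^-1 * s).
Proof.
move/(hasSumZ (pi x)^-1); apply: eq_hasSum => y.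
by rewrite /GRing.scale /= /Defs.P mulrA (mulrC (pi x)^-1).
Qed.

Lemma lap_finsupp (A : {fset V}) (f : V -> R) : (forall y, y \notin A -> f y = 0) ->
  forall x, lap c f x = f x - \sum_(y <- A) P x y * f y.
Proof.
move=> fA x; apply: hasSum_vsum.
have Pf : hasSum (fun y => P x y * f y) (\sum_(y <- A) P x y * f y).
  by apply: hasSum_finsupp => y /fA ->; rewrite mulr0.
have := hasSumD (hasSumZ (f x) (hasSum_P x)) (hasSumZ (-1) Pf).
rewrite [f x *: 1]mulr1 scaleN1r; apply: eq_hasSum => y.
by rewrite scaleN1r /GRing.scale /= mulrBr mulrC.
Qed.

Section Gradient.
Context {H : normedModType R} {ip : H -> H -> R} {Om : {fset V}} {alpha : V -> H}
  {u : V -> R}.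
Hypothesis ip_inner : inner_product_for ip.
Hypothesis u_supp : forall x, x \notin Om -> u x = 0.
Hypothesis Gamma_fin : forall x, x \in Om ->
  exists s, hasSum (fun y => c x y * `|alpha x - alpha y| ^+ 2) s.

Lemma GammaA_u2E : GammaA_u2 c alpha u =
  2^-1 * \sum_(x <- Om) u x ^+ 2 * vsum (fun y => c x y * `|alpha x - alpha y| ^+ 2).
Proof.
rewrite /GammaA_u2 (hasSum_vsum (hasSum_finsupp _ Om _)) => [|x /u_supp->]; last first.
  by rewrite expr0n mulr0.
rewrite mulr_sumr; apply: eq_big_seq => x /Gamma_fin[s cs].
rewrite /GammaA (hasSum_vsum (hasSum_P_mul cs)) (hasSum_vsum cs).
by field; rewrite gt_eqF ?pi_gt0.
Qed.

Lemma LambdaE : Lambda c alpha u = 2^-1 * \sum_(x <- Om)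
    (u x ^+ 2 * vsum (fun y => c x y * `|alpha x - alpha y| ^+ 2)
     - \sum_(y <- Om) c x y * u x * u y * `|alpha x - alpha y| ^+ 2).
Proof.
set D := fun x y => `|alpha x - alpha y| ^+ 2.
(* Expand |u x - u y|^2: by symmetry of c, both square terms contribute the same sum. *)
have sq_row : hasSum (fun p : V * V => u p.1 ^+ 2 * (c p.1 p.2 * D p.1 p.2))
    (\sum_(x <- Om) u x ^+ 2 * vsum (fun y => c x y * D x y)).
  apply: (hasSum_pair_fin (F := fun x y => u x ^+ 2 * (c x y * D x y)))
    => [x /Gamma_fin[s cs]|x y /u_supp->]; last by rewrite expr0n mul0r.
  by rewrite (hasSum_vsum cs); apply: hasSumZ.
have cross : hasSum (fun p : V * V => c p.1 p.2 * u p.1 * u p.2 * D p.1 p.2)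
    (\sum_(x <- Om) \sum_(y <- Om) c x y * u x * u y * D x y).
  apply: (hasSum_pair_fin (F := fun x y => c x y * u x * u y * D x y))
    => [x _|x y /u_supp->]; last by rewrite mulr0 !mul0r.
  by apply: hasSum_finsupp => y /u_supp->; rewrite mulr0 mul0r.
have := hasSumD (hasSumD sq_row (hasSum_swap sq_row)) (hasSumZ (-2) cross).
move/(eq_hasSum (G := fun p => c p.1 p.2 * `|u p.1 - u p.2| ^+ 2 * D p.1 p.2)).
move=> Lsum; rewrite /Lambda (hasSum_vsum (Lsum _)) => [|[x y]] /=; last first.
  rewrite (c_sym y x) /D (distrC (alpha y)) real_normK ?num_real //.
  by rewrite /GRing.scale /=; ring.
by rewrite sumrB /GRing.scale /=; field.
Qed.

Lemma GammaA_u2_subLambda : GammaA_u2 c alpha u - Lambda c alpha u =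
  2^-1 * \sum_(x <- Om) \sum_(y <- Om) c x y * u x * u y * `|alpha x - alpha y| ^+ 2.
Proof. by rewrite GammaA_u2E LambdaE sumrB; ring. Qed.

Lemma sum_ip_beta_fin :
  \sum_(x <- Om) pi x * ip (beta_fin c Om alpha u x) (u x *: alpha x) =
  2^-1 * \sum_(x <- Om) \sum_(y <- Om) c x y * u x * u y * `|alpha x - alpha y| ^+ 2.
Proof.
set T := \sum_(x <- Om) \sum_(y <- Om) c x y * u x * u y * ip (alpha x - alpha y) (alpha x).
have -> : \sum_(x <- Om) pi x * ip (beta_fin c Om alpha u x) (u x *: alpha x) = T.
  apply: eq_bigr => x _; rewrite (ip_suml ip_inner) mulr_sumr.
  by apply: eq_bigr => y _; rewrite (ipZr ip_inner) -mul_pi_P; ring.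
have T_swap : T = \sum_(x <- Om) \sum_(y <- Om)
    c x y * u x * u y * ip (alpha y - alpha x) (alpha y).
  rewrite /T exchange_big; apply: eq_bigr => x _; apply: eq_bigr => y _.
  by rewrite c_sym; ring.
suff <- : T + T = \sum_(x <- Om) \sum_(y <- Om) c x y * u x * u y * `|alpha x - alpha y| ^+ 2.
  by field.
rewrite {2}T_swap /T -big_split; apply: eq_bigr => x _; rewrite -big_split.
apply: eq_bigr => y _ /=; rewrite -(ip_norm ip_inner) (ipBr ip_inner).
by rewrite -[alpha y - alpha x]opprB (ipNl ip_inner); ring.
Qed.

End Gradient.

Section CompleteGradient.
Context {H : completeNormedModType R} {Om : {fset V}} {alpha : V -> H} {u : V -> R}.
Hypothesis u_supp : forall x, x \notin Om -> u x = 0.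
Hypothesis Gamma_fin : forall x, x \in Om ->
  exists s, hasSum (fun y => c x y * `|alpha x - alpha y| ^+ 2) s.

Lemma hasSum_lap x : x \in Om ->
  hasSum (fun y => P x y *: (alpha x - alpha y)) (lap c alpha x).
Proof.
move=> /Gamma_fin[s /hasSum_P_mul cs].
suff [L PL] : exists L, hasSum (fun y => P x y *: (alpha x - alpha y)) L.
  by rewrite /lap (hasSum_vsum PL).
apply: (hasSum_dominated _ (hasSumD (hasSum_P x) cs)) => y.
rewrite normrZ ger0_norm ?P_ge0 // -[X in _ <= X + _]mulr1 -mulrDr.
apply: ler_wpM2l; first exact: P_ge0.
by have := normr_ge0 (alpha x - alpha y); nra.
Qed.

Lemma hasSum_scale_lap x :
  hasSum (fun y => (u x * P x y) *: (alpha x - alpha y)) (u x *: lap c alpha x).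
Proof.
have [/hasSum_lap/(hasSumZ (u x))|/u_supp ux0] := boolP (x \in Om).
  by apply: eq_hasSum => y; rewrite scalerA.
by rewrite ux0 scale0r; apply: eq_hasSum hasSum0 => y; rewrite mul0r scale0r.
Qed.

Lemma beta_finE x :
  u x *: lap c alpha x - 2 *: GammaAU c alpha u x = beta_fin c Om alpha u x.
Proof.
have beta_sum :
    hasSum (fun y => (P x y * u y) *: (alpha x - alpha y)) (beta_fin c Om alpha u x).
  by apply: hasSum_finsupp => y /u_supp->; rewrite mulr0 scale0r.
have two_neq0 : (2 : R) != 0 by rewrite pnatr_eq0.
rewrite /GammaAU scalerA mulfV // scale1r.
have := hasSumD (hasSum_scale_lap x) (hasSumZ (-1) beta_sum).
move/(eq_hasSum (G := fun y => (P x y * (u x - u y)) *: (alpha x - alpha y))).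
move=> Gamma_sum; rewrite (hasSum_vsum (Gamma_sum _)).
  by rewrite scaleN1r opprD addrA subrr sub0r opprK.
by move=> y; rewrite scaleN1r -scaleNr -scalerDl; congr (_ *: _); ring.
Qed.

Lemma pi_beta_fin_sqr_le x : pi x * `|beta_fin c Om alpha u x| ^+ 2 <=
  #|` Om|%:R * \sum_(y <- Om) u y ^+ 2 * (c y x * `|alpha y - alpha x| ^+ 2).
Proof.
pose z y := P x y * `|u y| * `|alpha x - alpha y|.
have beta_le : `|beta_fin c Om alpha u x| <= \sum_(y <- Om) z y.
  apply: le_trans (ler_norm_sum _ _ _) _; apply: ler_sum => y _.
  by rewrite normrZ normrM (ger0_norm (P_ge0 x y)).
have beta_sqr : `|beta_fin c Om alpha u x| ^+ 2 <= #|` Om|%:R * \sum_(y <- Om) z y ^+ 2.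
  by apply: le_trans (sqr_sum_le Om z); have := normr_ge0 (beta_fin c Om alpha u x); nra.
apply: le_trans (ler_wpM2l (ltW (pi_gt0 x)) beta_sqr) _.
rewrite mulrCA [pi x * _]mulr_sumr; apply: ler_wpM2l; first exact: ler0n.
apply: ler_sum => y _.
rewrite (c_sym y x) (distrC (alpha y)) /z 2!exprMn real_normK ?num_real //.
have -> : pi x * (P x y ^+ 2 * u y ^+ 2 * `|alpha x - alpha y| ^+ 2) =
    P x y * (u y ^+ 2 * (c x y * `|alpha x - alpha y| ^+ 2)) by rewrite -mul_pi_P; ring.
by apply: ler_piMl; [rewrite mulr_ge0 ?sqr_ge0 ?mulr_ge0 ?c_ge0 | exact: P_le1].
Qed.

Lemma normsq_ge_beta_fin :
  \sum_(x <- Om) pi x * `|beta_fin c Om alpha u x| ^+ 2 <=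
  normsq c (fun x => u x *: lap c alpha x - 2 *: GammaAU c alpha u x).
Proof.
have -> : (fun x => u x *: lap c alpha x - 2 *: GammaAU c alpha u x) = beta_fin c Om alpha u.
  by apply: funext => x; apply: beta_finE.
(* beta_fin need not vanish off Omega; pi |beta_fin|^2 is summable over V by domination. *)
have dom_sum : hasSum
    (fun x => #|` Om|%:R *: \sum_(y <- Om) u y ^+ 2 * (c y x * `|alpha y - alpha x| ^+ 2))
    (#|` Om|%:R *: \sum_(y <- Om) u y ^+ 2 * vsum (fun x => c y x * `|alpha y - alpha x| ^+ 2)).
  apply: hasSumZ; apply: hasSum_big => y /Gamma_fin[s cs].
  by rewrite (hasSum_vsum cs); apply: hasSumZ.
have pi_beta_ge0 x : 0 <= pi x * `|beta_fin c Om alpha u x| ^+ 2.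
  exact: mulr_ge0 (ltW (pi_gt0 x)) (sqr_ge0 _).
have [t beta_sum] : exists t, hasSum (fun x => pi x * `|beta_fin c Om alpha u x| ^+ 2) t.
  apply: hasSum_dominated dom_sum => x.
  by rewrite ger0_norm //; apply: pi_beta_fin_sqr_le.
by rewrite /normsq (hasSum_vsum beta_sum); apply: psum_le_hasSum pi_beta_ge0 beta_sum.
Qed.

End CompleteGradient.

Section DirichletSystem.
Context {H : completeNormedModType R} {ip : H -> H -> R} {alpha : V -> H}
  {Om : {fset V}} {n : nat} {lam : 'I_n -> R} {u : 'I_n -> V -> R}.
Hypothesis Om_card : #|` Om| = n.
Hypothesis u_supp : forall i x, x \notin Om -> u i x = 0.
Hypothesis u_eigen : forall i x, lapD c Om (u i) x = lam i * u i x.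
Hypothesis u_orth : forall i j, ipi c (u i) (u j) = (i == j)%:R.
Hypothesis ip_inner : inner_product_for ip.
Hypothesis Gamma_fin : forall x, x \in Om ->
  exists s, hasSum (fun y => c x y * `|alpha x - alpha y| ^+ 2) s.

Lemma sum_c_eigen i x : x \in Om ->
  \sum_(y <- Om) c x y * u i y = pi x * (1 - lam i) * u i x.
Proof.
move=> xOm; have := u_eigen i x; rewrite /lapD xOm (lap_finsupp Om (u i) (u_supp i)) => E.
rewrite (eq_bigr (fun y => pi x * (P x y * u i y))) => [|y _]; last by rewrite mulrA mul_pi_P.
rewrite -mulr_sumr.
have -> : \sum_(y <- Om) P x y * u i y = u i x - lam i * u i x by rewrite -E; ring.
ring.
Qed.

Lemma sum_pi_orthonormal i j : \sum_(x <- Om) pi x * u i x * u j x = (i == j)%:R.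
Proof.
rewrite -u_orth /ipi (hasSum_vsum (hasSum_finsupp _ Om _)) // => x /(u_supp i)->.
by rewrite mulr0 mul0r.
Qed.

Lemma ipiH_beta_fin i j : ipiH c Om (u j) (beta_fin c Om alpha (u i)) =
  (lam j - lam i) *: ipiH c Om (fun x => u i x * u j x) alpha.
Proof.
have -> : ipiH c Om (u j) (beta_fin c Om alpha (u i)) =
    \sum_(x <- Om) \sum_(y <- Om) (c x y * u j x * u i y) *: alpha x -
    \sum_(x <- Om) \sum_(y <- Om) (c x y * u j x * u i y) *: alpha y.
  rewrite -sumrB; apply: eq_bigr => x _; rewrite /beta_fin scaler_sumr -sumrB.
  by apply: eq_bigr => y _; rewrite scalerA -scalerBr -mul_pi_P; congr (_ *: _); ring.
rewrite [X in _ - X]exchange_big /= -sumrB /ipiH scaler_sumr.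
apply: eq_big_seq => x xOm.
rewrite -!scaler_suml -scalerBl scalerA; congr (_ *: _).
have -> : \sum_(y <- Om) c x y * u j x * u i y = u j x * \sum_(y <- Om) c x y * u i y.
  by rewrite mulr_sumr; apply: eq_bigr => y _; ring.
have -> : (\sum_(y <- Om) c y x * u j y) *: u i x = u i x * \sum_(y <- Om) c x y * u j y.
  by rewrite [_ *: _]mulrC; congr (_ * _); apply: eq_bigr => y _; rewrite c_sym.
by rewrite !sum_c_eigen //; ring.
Qed.

Lemma GammaA_u2_subLambda_coef i : GammaA_u2 c alpha (u i) - Lambda c alpha (u i) =
  \sum_(j < n) (lam j - lam i) * `|ipiH c Om (fun x => u i x * u j x) alpha| ^+ 2.
Proof.
rewrite (GammaA_u2_subLambda (u_supp i) Gamma_fin) -(sum_ip_beta_fin ip_inner).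
rewrite (parseval ip_inner (orthonormal_complete Om_card sum_pi_orthonormal)).
apply: eq_bigr => j _; rewrite -/(ipiH c Om (u j) (beta_fin c Om alpha (u i))).
have -> : \sum_(y <- Om) (pi y * u j y) *: (u i y *: alpha y) =
    ipiH c Om (fun x => u i x * u j x) alpha.
  by apply: eq_bigr => y _; rewrite scalerA; congr (_ *: _); ring.
by rewrite ipiH_beta_fin (ipZl ip_inner) (ip_norm ip_inner).
Qed.

Lemma normsq_ge_coef i :
  \sum_(j < n) (lam j - lam i) ^+ 2 * `|ipiH c Om (fun x => u i x * u j x) alpha| ^+ 2 <=
  normsq c (fun x => u i x *: lap c alpha x - 2 *: GammaAU c alpha (u i) x).
Proof.
suff -> : \sum_(j < n) (lam j - lam i) ^+ 2 * `|ipiH c Om (fun x => u i x * u j x) alpha| ^+ 2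
    = \sum_(x <- Om) pi x * `|beta_fin c Om alpha (u i) x| ^+ 2.
  exact: normsq_ge_beta_fin (u_supp i) Gamma_fin.
under [RHS]eq_bigr do rewrite -(ip_norm ip_inner).
rewrite (parseval ip_inner (orthonormal_complete Om_card sum_pi_orthonormal)).
apply: eq_bigr => j _; rewrite -/(ipiH c Om (u j) (beta_fin c Om alpha (u i))).
by rewrite ipiH_beta_fin (ipZl ip_inner) (ipZr ip_inner) (ip_norm ip_inner) mulrA -expr2.
Qed.

End DirichletSystem.

End Network.

Local Close Scope classical_set_scope.

Theorem theorem3p2 (R : realType) (V : countType) (c : V -> V -> R)
  (Om : {fset V}) (n : nat)
  (lam : 'I_n -> R) (u : 'I_n -> V -> R)
  (H : completeNormedModType R) (ip : H -> H -> R) (alpha : V -> H)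
  (k : nat) :
  is_network c ->
  #|` Om| = n ->
  (* Dirichlet system for Om *)
  (forall i j : 'I_n, (i <= j)%N -> lam i <= lam j) ->
  (forall i x, x \notin Om -> u i x = 0) ->
  (forall i x, lapD c Om (u i) x = lam i * u i x) ->
  (forall i j, ipi c (u i) (u j) = (i == j)%:R) ->
  (* H is a real Hilbert space *)
  inner_product_for ip ->
  (* Gamma(alpha) is finite on Om (well-definedness of all quantities) *)
  (forall x, x \in Om -> exists s : R,
       hasSum (fun y => c x y * `|alpha x - alpha y| ^+ 2) s) ->
  forall hk : (k < n)%N,
  \sum_(i < n | (i < k)%N)
      (lam (Ordinal hk) - lam i) ^+ 2 *
      (GammaA_u2 c alpha (u i) - Lambda c alpha (u i))
  <=
  \sum_(i < n | (i < k)%N)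
      (lam (Ordinal hk) - lam i) *
      normsq c (fun x => u i x *: lap c alpha x - 2 *: GammaAU c alpha (u i) x).
Proof.
move=> c_network Om_card lam_mono u_supp u_eigen u_orth ip_inner Gamma_fin hk.
apply: (gap_ineq (A := fun i j => `|ipiH c Om (fun x => u i x * u j x) alpha| ^+ 2))
  lam_mono _ (fun i j => sqr_ge0 _) _ _.
- move=> i j; suff -> : (fun x => u i x * u j x) = (fun x => u j x * u i x) by [].
  by apply: funext => x; rewrite mulrC.
- exact: (GammaA_u2_subLambda_coef c_network Om_card u_supp u_eigen u_orth ip_inner Gamma_fin).
- exact: (normsq_ge_coef c_network Om_card u_supp u_eigen u_orth ip_inner Gamma_fin).
Qed.
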